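(* Let $(Y,S,\gamma)$ be a deterministic machine, i.e. there is a measurable function $f\colon Y\times S\to Y$ with $\gamma(\cdot\mid y,s)=\delta_{f(y,s)}$ for all $y\in Y$, $s\in S$. Let $H$ be a standard Borel space and let $\psi_H\colon Y\to P(H)$ and $\kappa\colon H\to P(H\times S)$ be arbitrary Markov kernels. Then $(H,\psi_H,\kappa)$ is a consistent Bayesian filtering interpretation of $\gamma$ if and only if for every $y\in Y$ and all measurable $C\subseteq H$, $A\subseteq S$, $$\psi_{S,H'}(C\times A\mid y)=\int_A \psi_H\big(C\mid f(y,s)\big)\,\psi_S(ds\mid y).$$
   Context: All measurable spaces are standard Borel; $P(X)$ denotes the set of probability measures on $X$, and a Markov kernel $k\colon X\to P(Z)$ is a measurable map, written $k(E\mid x)$ for measurable $E\subseteq Z$. A machine $(Y,S,\gamma)$ consists of measurable spaces $Y$ (states) and $S$ (inputs) and a Markov kernel $\gamma\colon Y\times S\to P(Y)$. Given a measurable space $H$ and Markov kernels $\psi_H\colon Y\to P(H)$, $\kappa\colon H\to P(H\times S)$, define the kernels $\psi_{S,H'}\colon Y\to P(H\times S)$ by $\psi_{S,H'}(E\mid y)=\int_H\kappa(E\mid h)\,\psi_H(dh\mid y)$ and $\psi_S\colon Y\to P(S)$ by $\psi_S(A\mid y)=\psi_{S,H'}(H\times A\mid y)$. The triple $(H,\psi_H,\kappa)$ is a consistent Bayesian filtering interpretation of $\gamma$ if for all $y\in Y$ and all measurable $C\subseteq H$, $A\subseteq S$, $B\subseteq Y$: $$\int_{C\times A}\gamma(B\mid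 y,s)\,\psi_{S,H'}(dh',ds\mid y)=\int_A\int_B\psi_H(C\mid y')\,\gamma(dy'\mid y,s)\,\psi_S(ds\mid y).$$ *)

From HB Require Import structures.
From mathcomp Require Import all_boot all_order all_algebra.
From mathcomp Require Import all_classical all_reals all_analysis.
Set Implicit Arguments. Unset Strict Implicit. Unset Printing Implicit Defensive.
Import Order.TTheory GRing.Theory Num.Theory.
Local Open Scope classical_set_scope.
Local Open Scope ring_scope.
Local Open Scope ereal_scope.

(* Standard Borel space (Kuratowski form): the measurable space T is Borel
   isomorphic to a Borel subset of the real line. *)
Definition standard_borel (R : realType) d (T : measurableType d) : Prop :=
  exists g : T -> R,
    [/\ measurable_fun [set: T] g, injective g, measurable (range g)
      & forall A : set T, measurable A -> measurable (g @` A)].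

(* psi_{S,H'}(E | y) = \int_H kappa(E | h) psi_H(dh | y) *)
Definition psiSH (R : realType) dY dH dS (Y : measurableType dY)
  (H : measurableType dH) (S : measurableType dS)
  (psiH : R.-pker Y ~> H) (kappa : R.-pker H ~> (H * S)%type) :
  Y -> {measure set (H * S)%type -> \bar R} :=
  mkcomp_noparam psiH kappa.

Definition psiS (R : realType) dY dH dS (Y : measurableType dY)
  (H : measurableType dH) (S : measurableType dS)
  (psiH : R.-pker Y ~> H) (kappa : R.-pker H ~> (H * S)%type)
  (y : Y) : set S -> \bar R :=
  fun A => psiSH psiH kappa y ([set: H] `*` A).

Definition consistent_bfi (R : realType) dY dH dS (Y : measurableType dY)
  (H : measurableType dH) (S : measurableType dS)
  (gamma : R.-pker (Y * S)%type ~> Y)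
  (psiH : R.-pker Y ~> H) (kappa : R.-pker H ~> (H * S)%type) : Prop :=
  forall (y : Y) (C : set H) (A : set S) (B : set Y),
    measurable C -> measurable A -> measurable B ->
    \int[psiSH psiH kappa y]_(z in C `*` A) gamma (y, z.2) B =
    \int[psiS psiH kappa y]_(s in A) \int[gamma (y, s)]_(y' in B) psiH y' C.

From HB Require Import structures.
From mathcomp Require Import all_boot all_order all_algebra.
From mathcomp Require Import all_classical all_reals all_analysis.
From mathcomp Require Import measurable_realfun.
Import Order.TTheory GRing.Theory Num.Theory.
Local Open Scope classical_set_scope.
Local Open Scope ring_scope.
Local Open Scope ereal_scope.

(* For a deterministic machine, gamma(B | y, s) is the indicator of the section
   {s | f (y, s) \in B}, and integrating against gamma(. | y, s) is evaluation
   at f (y, s).  Both sides of the consistency condition therefore collapse to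
   the two sides of the claimed identity, taken over the smaller input set
   A `&` {s | f (y, s) \in B}; conversely the case B = Y recovers it. *)

Section indicator_integrals.
Context {d : measure_display} {T : measurableType d} {R : realType}.

Lemma integral_indicMl (mu : set T -> \bar R) (D P : set T) (h : T -> \bar R) :
  \int[mu]_(x in D) ((\1_P x)%:E * h x) = \int[mu]_(x in D `&` P) h x.
Proof.
rewrite /integral; suff -> : (fun x => (\1_P x)%:E * h x) \_ D = h \_ (D `&` P) by [].
rewrite patch_setI; apply/funext => x; rewrite /patch indicE.
by case: (x \in D); case: (x \in P); rewrite ?mul1e ?mul0e.
Qed.

Lemma integral_dirac_eq {mu : {measure set T -> \bar R}} {a : T}
    {D : set T} {g : T -> \bar R} :
  (forall B, measurable B -> mu B = \d_a B) -> measurable D ->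
  measurable_fun D g ->
  \int[mu]_(x in D) g x = \d_a D * g a.
Proof.
move=> mu_dirac mD mg; rewrite -integral_dirac//.
by apply: eq_measure_integral => B mB _; rewrite mu_dirac.
Qed.

End indicator_integrals.

Lemma integral_setX_indic_snd d1 d2 (T1 : measurableType d1)
    (T2 : measurableType d2) (R : realType)
    (mu : {measure set (T1 * T2)%type -> \bar R}) (C : set T1) (A P : set T2) :
  measurable C -> measurable A -> measurable P ->
  \int[mu]_(z in C `*` A) (\1_P z.2)%:E = mu (C `*` (A `&` P)).
Proof.
move=> mC mA mP.
rewrite (eq_integral (fun z => (\1_([set: T1] `*` P) z)%:E)); last first.
  by move=> [x1 x2] _; rewrite !indicE in_setX in_setT.
rewrite integral_indic//; try exact: measurableX.
by congr (mu _); apply/seteqP; split => -[x1 x2] /= => [[[_ ?] [? ?]] | [? [? ?]]].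
Qed.

Section deterministic_machine.
Context {R : realType} {dY dS dH : measure_display}.
Context {Y : measurableType dY} {S : measurableType dS} {H : measurableType dH}.
Context {gamma : R.-pker (Y * S)%type ~> Y} {f : (Y * S)%type -> Y}.
Hypothesis mf : measurable_fun [set: (Y * S)%type] f.
Hypothesis gamma_dirac : forall (y : Y) (s : S) (B : set Y), measurable B ->
  gamma (y, s) B = \d_(f (y, s)) B.
Context {psiH : R.-pker Y ~> H} {kappa : R.-pker H ~> (H * S)%type}.

Let section_preimage (y : Y) (B : set Y) : set S := (fun s => f (y, s)) @^-1` B.

Lemma measurable_section_preimage y B :
  measurable B -> measurable (section_preimage y B).
Proof.
move=> mB; rewrite -[X in measurable X]setTI.
exact: (measurableT_comp mf (pair1_measurable y)) measurableT B mB.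
Qed.

Let gamma_indic y s B : measurable B ->
  gamma (y, s) B = (\1_(section_preimage y B) s)%:E.
Proof. by move=> mB; rewrite gamma_dirac// diracE indicE. Qed.

Lemma consistent_bfi_deterministicE :
  consistent_bfi gamma psiH kappa <->
  (forall (y : Y) (C : set H) (A : set S) (B : set Y),
    measurable C -> measurable A -> measurable B ->
    psiSH psiH kappa y (C `*` (A `&` section_preimage y B)) =
    \int[psiS psiH kappa y]_(s in A `&` section_preimage y B)
       psiH (f (y, s)) C).
Proof.
have sides_collapse y C A B : measurable C -> measurable A -> measurable B ->
    (\int[psiSH psiH kappa y]_(z in C `*` A) gamma (y, z.2) B =
     psiSH psiH kappa y (C `*` (A `&` section_preimage y B))) /\
    (\int[psiS psiH kappa y]_(s in A) \int[gamma (y, s)]_(y' in B) psiH y' C =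
     \int[psiS psiH kappa y]_(s in A `&` section_preimage y B)
       psiH (f (y, s)) C).
  move=> mC mA mB; split.
    rewrite -integral_setX_indic_snd//; last exact: measurable_section_preimage.
    by apply: eq_integral => z _; rewrite gamma_indic.
  rewrite -integral_indicMl; congr (integral _ _ _); apply: funext => s.
  rewrite (integral_dirac_eq (gamma_dirac y s))//.
  exact/(measurable_funS measurableT)/measurable_kernel.
split=> [hcons | hyp] y C A B mC mA mB;
  have [eqL eqR] := sides_collapse y C A B mC mA mB.
- by rewrite -eqL -eqR; exact: hcons.
- by rewrite eqL eqR; exact: hyp.
Qed.

End deterministic_machine.

Theorem mainTheorem1 (R : realType) (dY dS dH : measure_display)
  (Y : measurableType dY) (S : measurableType dS) (H : measurableType dH)
  (sbY : standard_borel R Y) (sbS : standard_borel R S)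
  (sbH : standard_borel R H)
  (gamma : R.-pker (Y * S)%type ~> Y)
  (f : (Y * S)%type -> Y) (mf : measurable_fun [set: (Y * S)%type] f)
  (hdet : forall (y : Y) (s : S) (B : set Y), measurable B ->
            gamma (y, s) B = \d_(f (y, s)) B)
  (psiH : R.-pker Y ~> H) (kappa : R.-pker H ~> (H * S)%type) :
  consistent_bfi gamma psiH kappa <->
  (forall (y : Y) (C : set H) (A : set S), measurable C -> measurable A ->
     psiSH psiH kappa y (C `*` A) =
     \int[psiS psiH kappa y]_(s in A) psiH (f (y, s)) C).
Proof.
rewrite (consistent_bfi_deterministicE mf hdet).
split=> [hcons y C A mC mA | hyp y C A B mC mA mB].
  by have := hcons y C A setT mC mA measurableT; rewrite preimage_setT setIT.
by apply: hyp => //; exact/measurableI/measurable_section_preimage.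
Qed.
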